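(* (i) For every normalized one-parameter subgroup $\lambda$ of $\mathrm{SL}_2\times\mathrm{SL}_3$, the set $M^{\ominus}(\lambda)$ is contained in $M^{\ominus}(\lambda'_i)$ for some $i\in\{1,\dots,7\}$, where $\lambda'_1=(3,-3,2,2,-4)$, $\lambda'_2=(3,-3,2,0,-2)$, $\lambda'_3=(3,-3,4,-2,-2)$, $\lambda'_4=(0,0,2,-1,-1)$, $\lambda'_5=(1,-1,2,0,-2)$, $\lambda'_6=(0,0,1,1,-2)$, $\lambda'_7=(1,-1,0,0,0)$. (ii) A $(2,3)$-hypersurface $S=\{f=0\}\subset\mathbb{P}^1\times\mathbb{P}^2$ is not properly stable if $f$ is of one of the following forms, where $c,c_i$ denote cubic forms, $q,q_i$ quadratic forms, $l$ linear forms in the indicated variables and $\mu,\nu$ constants: (N1) $f=x_1^2c(y_0,y_1,y_2)+x_0x_1y_2q(y_0,y_1)+x_0^2y_2^2l(y_0,y_1,y_2)$; (N2) $f=x_1^2c_0(y_0,y_1,y_2)+x_0x_1[c_1(y_1,y_2)+y_0y_2l(y_1,y_2)]+\mu x_0^2y_2^3$; (N3) $f=x_1^2[c_1(y_1,y_2)+y_0q_1(y_1,y_2)+y_0^2l(y_1,y_2)]+x_0x_1[c_2(y_1,y_2)+y_0q_2(y_1,y_2)]+x_0^2c_0(y_1,y_2)$; (N4) $f=x_1^2[c_0(y_1,y_2)+y_0q_0(y_1,y_2)]+x_0x_1[c_1(y_1,y_2)+y_0q_1(y_1,y_2)]+x_0^2[c_2(y_1,y_2)+y_0q_2(y_1,y_2)]$;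 (N5) $f=x_1^2[c_0(y_1,y_2)+y_0q_0(y_1,y_2)+\mu y_0^2y_2]+x_0x_1[c_1(y_1,y_2)+y_0y_2l(y_1,y_2)]+x_0^2y_2(q_2(y_1,y_2)+\nu y_0y_2)$; (N6) $f=y_2\cdot q(x_0,x_1,y_0,y_1,y_2)$ with $q$ bihomogeneous of bidegree $(2,2)$; (N7) $f=x_1[x_0c_0(y_0,y_1,y_2)+x_1c_1(y_0,y_1,y_2)]$.
   Context: Bihomogeneous coordinates $(x_0,x_1;y_0,y_1,y_2)$ on $\mathbb{P}^1\times\mathbb{P}^2$; stability refers to GIT for the natural action of $\mathrm{SL}_2\times\mathrm{SL}_3$ on $\mathbb{P}(H^0(\mathcal{O}(2,3)))$. A tuple $(a,-a,b,c,-b-c)$ denotes the one-parameter subgroup $t\mapsto\mathrm{diag}(t^a,t^{-a},t^b,t^c,t^{-b-c})$ acting on $(x_0,x_1,y_0,y_1,y_2)$; it is normalized if $a\geq0$ and $b\geq c\geq-b-c$. The weight of the monomial $x_0^ux_1^{2-u}y_0^vy_1^wy_2^{3-v-w}$ with respect to it is $au-a(2-u)+bv+cw+(-b-c)(3-v-w)$. $M^{\ominus}(\lambda)$ is the set of bidegree $(2,3)$ monomials of non-positive weight with respect to $\lambda$. *)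

(* Ground field: algC (an algebraically closed field of
   characteristic 0, standing in for the complex numbers). *)
From HB Require Import structures.
From mathcomp Require Import all_boot all_order all_algebra all_field.
From mathcomp Require Import mpoly.
Set Implicit Arguments. Unset Strict Implicit. Unset Printing Implicit Defensive.
Import Order.TTheory GRing.Theory Num.Theory.
Local Open Scope ring_scope.

(* Monomials of bidegree (2,3):  x0^u x1^(2-u) y0^v y1^w y2^(3-v-w).       *)
Definition mon := {m : 'I_3 * 'I_4 * 'I_4 | (nat_of_ord m.1.2 + nat_of_ord m.2 <= 3)%N}.

Definition mu (m : mon) : nat := (val m).1.1.
Definition mx1 (m : mon) : nat := (2 - mu m)%N.
Definition mv (m : mon) : nat := (val m).1.2.
Definition mw (m : mon) : nat := (val m).2.
Definition mz (m : mon) : nat := (3 - mv m - mw m)%N.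

(* A one-parameter subgroup (a,-a,b,c,-b-c) is encoded by the triple (a,b,c). *)
Definition ops := (int * int * int)%type.

Definition normalized (l : ops) : Prop :=
  let '(a, b, c) := l in 0 <= a /\ c <= b /\ - b - c <= c.

Definition nontrivial (l : ops) : Prop := l <> (0, 0, 0).

Definition weight (l : ops) (m : mon) : int :=
  let '(a, b, c) := l in
  a * (mu m)%:Z - a * (mx1 m)%:Z + b * (mv m)%:Z + c * (mw m)%:Z
  + (- b - c) * (mz m)%:Z.

Definition Mneg (l : ops) : pred mon := fun m => weight l m <= 0.

Definition lam'1 : ops := (3, 2, 2).
Definition lam'2 : ops := (3, 2, 0).
Definition lam'3 : ops := (3, 4, -2).
Definition lam'4 : ops := (0, 2, -1).
Definition lam'5 : ops := (1, 2, 0).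
Definition lam'6 : ops := (0, 1, 1).
Definition lam'7 : ops := (1, 0, 0).
Definition lams' : seq ops := [:: lam'1; lam'2; lam'3; lam'4; lam'5; lam'6; lam'7].

Definition form23 := {ffun mon -> algC}.

Definition monv (m : mon) (x : 'cV[algC]_2) (y : 'cV[algC]_3) : algC :=
  x (inord 0) ord0 ^+ mu m * x (inord 1) ord0 ^+ mx1 m *
  y (inord 0) ord0 ^+ mv m * y (inord 1) ord0 ^+ mw m * y (inord 2) ord0 ^+ mz m.

Definition evalf (f : form23) (x : 'cV[algC]_2) (y : 'cV[algC]_3) : algC :=
  \sum_(m : mon) f m * monv m x y.

Definition acts (g1 : 'M[algC]_2) (g2 : 'M[algC]_3) (f h : form23) : Prop :=
  forall x y, evalf h x y = evalf f (g1 *m x) (g2 *m y).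

Definition inSL (g1 : 'M[algC]_2) (g2 : 'M[algC]_3) : Prop :=
  \det g1 = 1 /\ \det g2 = 1.

Definition orbit (f : form23) (h : form23) : Prop :=
  exists g1 g2, inSL g1 g2 /\ acts g1 g2 f h.

Definition coords (f : form23) : 'I_#|{: mon}| -> algC := fun i => f (enum_val i).

Definition zariski_closed (A : form23 -> Prop) : Prop :=
  forall p, ~ A p ->
    exists P : {mpoly algC[#|{: mon}|]},
      (forall q, A q -> P.@[coords q] = 0) /\ P.@[coords p] != 0.

Definition finite_stabilizer (f : form23) : Prop :=
  exists s : seq ('M[algC]_2 * 'M[algC]_3),
    forall g1 g2, inSL g1 g2 -> acts g1 g2 f f -> (g1, g2) \in s.

(* Mumford: [f] is properly stable iff f <> 0, the orbit of f in the affine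
   cone is closed and the stabilizer of f is finite. *)
Definition properly_stable (f : form23) : Prop :=
  f <> 0 /\ zariski_closed (orbit f) /\ finite_stabilizer f.

Definition supported_in (P : pred mon) (f : form23) : Prop :=
  forall m, f m != 0 -> P m.

Definition N1 : pred mon := fun m =>
  [|| mu m == 0%N,                        (* x1^2 c(y0,y1,y2) *)
      (mu m == 1%N) && (mz m == 1%N)      (* x0x1 y2 q(y0,y1) *)
    | (mu m == 2%N) && (2 <= mz m)%N ].   (* x0^2 y2^2 l(y0,y1,y2) *)

Definition N2 : pred mon := fun m =>
  [|| mu m == 0%N,                                          (* x1^2 c0 *)
      (mu m == 1%N) && ((mv m == 0%N) || ((mv m == 1%N) && (1 <= mz m)%N))
                     (* x0x1 [c1(y1,y2) + y0 y2 l(y1,y2)] *)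
    | (mu m == 2%N) && (mz m == 3%N) ].                     (* mu x0^2 y2^3 *)

Definition N3 : pred mon := fun m =>
  [|| (mu m == 0%N) && (mv m <= 2)%N,   (* x1^2 [c1 + y0 q1 + y0^2 l] (y1,y2) *)
      (mu m == 1%N) && (mv m <= 1)%N    (* x0x1 [c2 + y0 q2] *)
    | (mu m == 2%N) && (mv m == 0%N) ]. (* x0^2 c0(y1,y2) *)

Definition N4 : pred mon := fun m =>
  (mv m <= 1)%N.  (* each x-coefficient is c_i(y1,y2) + y0 q_i(y1,y2) *)

Definition N5 : pred mon := fun m =>
  [|| (mu m == 0%N) && ((mv m <= 1)%N || ((mv m == 2%N) && (mz m == 1%N))),
         (* x1^2 [c0(y1,y2) + y0 q0(y1,y2) + mu y0^2 y2] *)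
      (mu m == 1%N) && ((mv m == 0%N) || ((mv m == 1%N) && (1 <= mz m)%N))
         (* x0x1 [c1(y1,y2) + y0 y2 l(y1,y2)] *)
    | (mu m == 2%N) && (((mv m == 0%N) && (1 <= mz m)%N)
                        || ((mv m == 1%N) && (mz m == 2%N))) ].
         (* x0^2 y2 (q2(y1,y2) + nu y0 y2) *)

Definition N6 : pred mon := fun m => (1 <= mz m)%N.   (* y2 * q, q of bidegree (2,2) *)

Definition N7 : pred mon := fun m => (1 <= mx1 m)%N.  (* x1 [x0 c0 + x1 c1] *)

Definition is_Nform (f : form23) : Prop :=
  supported_in N1 f \/ supported_in N2 f \/ supported_in N3 f \/
  supported_in N4 f \/ supported_in N5 f \/ supported_in N6 f \/
  supported_in N7 f.

(* The weight is linear in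
   lambda = (a, b, c), so for each lambda'_i this holds on a polyhedral region of
   parameters; seven such regions cover the normalized nonzero triples (linear
   arithmetic), and the containment on each region is checked monomial by monomial.
   (ii) Each form (Ni) is supported on Mneg lambda'_i.  If f is supported on Mneg lambda
   with lambda nontrivial, then lambda(t)^-1 . f rescales the monomials of f by
   nonnegative powers of t, so this orbit curve extends to t = 0, where it is the
   weight-zero part f0 of f.  If the orbit of f is closed, then f0 = g . f for some g;
   as lambda fixes f0, the infinitely many conjugates of lambda(t) by g all fix f. *)
From Pilot Require Import Defs.
From HB Require Import structures.
From mathcomp Require Import all_boot all_order all_algebra all_field.
From mathcomp Require Import mpoly zify ring.
From Stdlib Require Import Classical_Prop.
Set Implicit Arguments. Unset Strict Implicit.
Import Order.TTheory GRing.Theory Num.Theory.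
Local Open Scope ring_scope.

Ltac case_exponents m :=
  let u := fresh "u" in let v := fresh "v" in let w := fresh "w" in
  let Hu := fresh "Hu" in let Hv := fresh "Hv" in let Hw := fresh "Hw" in
  let Hvw := fresh "Hvw" in
  case: m => [[[[u Hu] [v Hv]] [w Hw]] Hvw];
  rewrite /weight /mx1 /mz /mu /mv /mw /=;
  move: Hu Hv Hw Hvw;
  case: u => [|[|[|u]]] Hu //; case: v => [|[|[|[|v]]]] Hv //;
  case: w => [|[|[|[|w]]]] Hw // Hvw.

Section NormalizedCover.

Variables a b c : int.
Hypothesis normal_abc : normalized (a, b, c).

Lemma Mneg_sub_lam'1 :
  0 < c -> 0 < 2 * a - b + c -> {subset Mneg (a, b, c) <= Mneg lam'1}.
Proof.
by case: normal_abc => ? [? ?] ? ? m; rewrite !unfold_in /Mneg; case_exponents m; lia.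
Qed.

Lemma Mneg_sub_lam'2 : 0 < b - c -> 0 < b + 2 * c -> 0 < 2 * a - 2 * b - c ->
  {subset Mneg (a, b, c) <= Mneg lam'2}.
Proof.
by case: normal_abc => ? [? ?] ? ? ? m; rewrite !unfold_in /Mneg; case_exponents m; lia.
Qed.

Lemma Mneg_sub_lam'3 :
  0 < 3 * b - 2 * a -> 0 < 2 * a - b - 2 * c -> {subset Mneg (a, b, c) <= Mneg lam'3}.
Proof.
by case: normal_abc => ? [? ?] ? ? m; rewrite !unfold_in /Mneg; case_exponents m; lia.
Qed.

Lemma Mneg_sub_lam'4 : 0 < b - c - 2 * a -> {subset Mneg (a, b, c) <= Mneg lam'4}.
Proof.
by case: normal_abc => ? [? ?] ? m; rewrite !unfold_in /Mneg; case_exponents m; lia.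
Qed.

Lemma Mneg_sub_lam'5 : 0 < a -> 0 < b - c -> 0 < 2 * b + c - 2 * a -> 0 < 2 * a + 3 * c ->
  {subset Mneg (a, b, c) <= Mneg lam'5}.
Proof.
by case: normal_abc => ? [? ?] ? ? ? ? m; rewrite !unfold_in /Mneg; case_exponents m; lia.
Qed.

Lemma Mneg_sub_lam'6 : 0 < 3 * c - 2 * a -> {subset Mneg (a, b, c) <= Mneg lam'6}.
Proof.
by case: normal_abc => ? [? ?] ? m; rewrite !unfold_in /Mneg; case_exponents m; lia.
Qed.

Lemma Mneg_sub_lam'7 : 0 < 2 * a - 3 * b - 3 * c -> {subset Mneg (a, b, c) <= Mneg lam'7}.
Proof.
by case: normal_abc => ? [? ?] ? m; rewrite !unfold_in /Mneg; case_exponents m; lia.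
Qed.

Lemma normalized_cover : nontrivial (a, b, c) ->
  [|| (0 < c) && (0 < 2 * a - b + c),
      [&& 0 < b - c, 0 < b + 2 * c & 0 < 2 * a - 2 * b - c],
      (0 < 3 * b - 2 * a) && (0 < 2 * a - b - 2 * c),
      0 < b - c - 2 * a,
      [&& 0 < a, 0 < b - c, 0 < 2 * b + c - 2 * a & 0 < 2 * a + 3 * c],
      0 < 3 * c - 2 * a
    | 0 < 2 * a - 3 * b - 3 * c].
Proof.
move=> abc_neq0; have {}abc_neq0 : ~ (a = 0 /\ b = 0 /\ c = 0).
  by case=> a0 [b0 c0]; apply: abc_neq0; rewrite a0 b0 c0.
by case: normal_abc => *; lia.
Qed.

End NormalizedCover.

Theorem normalized_Mneg_sub_lams' l : normalized l -> nontrivial l ->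
  exists2 l', l' \in lams' & {subset Mneg l <= Mneg l'}.
Proof.
case: l => [[a b] c] normal_abc /(normalized_cover normal_abc).
case/or4P=> [/andP[h1 h2]|/and3P[h1 h2 h3]|/andP[h1 h2]|
            /or4P[h1|/and4P[h1 h2 h3 h4]|h1|h1]].
- by exists lam'1; [rewrite inE eqxx | exact: Mneg_sub_lam'1].
- by exists lam'2; [rewrite !inE eqxx orbT | exact: Mneg_sub_lam'2].
- by exists lam'3; [rewrite !inE eqxx !orbT | exact: Mneg_sub_lam'3].
- by exists lam'4; [rewrite !inE eqxx !orbT | exact: Mneg_sub_lam'4].
- by exists lam'5; [rewrite !inE eqxx !orbT | exact: Mneg_sub_lam'5].
- by exists lam'6; [rewrite !inE eqxx !orbT | exact: Mneg_sub_lam'6].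
- by exists lam'7; [rewrite !inE eqxx !orbT | exact: Mneg_sub_lam'7].
Qed.

Lemma meval_monomial_curve0 (R : numDomainType) n (P : {mpoly R[n]})
    (v : 'I_n -> R) (k : 'I_n -> nat) :
  (forall t : nat, P.@[fun i => v i * t.+1%:R ^+ k i] = 0) ->
  P.@[fun i => v i * 0 ^+ k i] = 0.
Proof.
move=> P_curve.
pose Q : {poly R} := mmap (@polyC R) (fun i => v i *: 'X^(k i)) P.
have hornerQ t : Q.[t] = P.@[fun i => v i * t ^+ k i].
  rewrite /Q /mmap horner_sum mevalE; apply: eq_bigr => m _.
  rewrite hornerM hornerC /mmap1 horner_prod; congr (_ * _); apply: eq_bigr => i _.
  by rewrite horner_exp hornerZ hornerXn.
rewrite -hornerQ; suff -> : Q = 0 by rewrite horner0.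
apply/eqP; apply: contraT => Q_neq0.
have := max_poly_roots Q_neq0 (rs := [seq t.+1%:R | t <- iota 0 (size Q)]).
rewrite size_map size_iota ltnn; apply.
  by apply/allP => _ /mapP [t _ ->]; rewrite /root hornerQ P_curve.
by rewrite map_inj_uniq ?iota_uniq // => t1 t2 /eqP; rewrite eqr_nat => /eqP [].
Qed.

Lemma pexpIrz_pos (R : numFieldType) (z : int) :
  z != 0 -> {in Num.pos &, injective ((@exprz R)^~ z)}.
Proof.
case: z => [n|n] z_neq0 x y; rewrite !posrE => x_gt0 y_gt0 /= xy; apply/eqP.
- by rewrite -(@eqrXn2 _ n) ?ltW ?lt0n //; apply/eqP.
- by rewrite -(@eqrXn2 _ n.+1) ?ltW //; apply/eqP/invr_inj.
Qed.

Lemma conjmx_inj (R : comUnitRingType) n (g : 'M[R]_n) :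
  g \in unitmx -> injective (fun d => g *m d *m invmx g).
Proof.
move=> g_unit d d' /(congr1 (mulmx (invmx g))); rewrite !mulmxA !mulVmx // !mul1mx.
by move/(congr1 (mulmx^~ g)); rewrite !mulmxKV.
Qed.

Lemma nat_injective_notin_seq (T : eqType) (F : nat -> T) (s : seq T) :
  injective F -> ~ (forall n, F n \in s).
Proof.
move=> F_inj F_in; have : ((size s).+1 <= size s)%N.
  rewrite -[X in (X <= _)%N](size_iota 0) -(size_map F).
  apply: uniq_leq_size; first by rewrite map_inj_uniq // iota_uniq.
  by move=> _ /mapP [n _ ->].
by rewrite ltnn.
Qed.

(* The matrices of lambda(s)^-1, so that monomials of weight w get rescaled by s^-w. *)
Definition ops_mx2 (l : ops) (s : algC) : 'M[algC]_2 :=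
  let '(a, _, _) := l in
  diag_mx (\row_(i < 2) if i == 0 :> nat then s ^ (- a) else s ^ a).

Definition ops_mx3 (l : ops) (s : algC) : 'M[algC]_3 :=
  let '(_, b, c) := l in
  diag_mx (\row_(i < 3) if i == 0 :> nat then s ^ (- b)
                        else if i == 1 :> nat then s ^ (- c) else s ^ (b + c)).

Definition ops_act (l : ops) (s : algC) (f : form23) : form23 :=
  [ffun m => s ^ (- weight l m) * f m].

Definition weight0_part (l : ops) (f : form23) : form23 :=
  [ffun m => if weight l m == 0 then f m else 0].

Lemma monv_ops_mx l s m x y : s != 0 ->
  monv m (ops_mx2 l s *m x) (ops_mx3 l s *m y) = s ^ (- weight l m) * monv m x y.
Proof.
case: l => [[a b] c] s_neq0; rewrite /monv !mul_diag_mx !mxE !inordK //=.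
have exprzn (z : int) (k : nat) : (s ^ z) ^+ k = s ^ (z * k%:Z) by rewrite -exprz_exp.
rewrite !exprMn !exprzn.
have -> : s ^ (- weight (a, b, c) m) =
    s ^ (- a * (mu m)%:Z) * s ^ (a * (mx1 m)%:Z) * s ^ (- b * (mv m)%:Z)
    * s ^ (- c * (mw m)%:Z) * s ^ ((b + c) * (mz m)%:Z).
  by rewrite -!expfzDr //; congr (s ^ _); rewrite /weight; ring.
ring.
Qed.

Lemma acts_ops l s f : s != 0 -> acts (ops_mx2 l s) (ops_mx3 l s) f (ops_act l s f).
Proof.
move=> s_neq0 x y; apply: eq_bigr => m _.
by rewrite ffunE monv_ops_mx //; ring.
Qed.

Lemma inSL_ops l s : s != 0 -> inSL (ops_mx2 l s) (ops_mx3 l s).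
Proof.
case: l => [[a b] c] s_neq0.
by split; rewrite det_diag !big_ord_recr big_ord0 /= !mxE /= mul1r -!expfzDr //;
  rewrite -[RHS](expr0z s); congr (s ^ _); ring.
Qed.

Lemma ops_mx_injective l : nontrivial l ->
  injective (fun n : nat => (ops_mx2 l n.+1%:R, ops_mx3 l n.+1%:R)).
Proof.
case: l => [[a b] c] l_neq0 n1 n2 [E2 E3].
suff : (n1.+1%:R : algC) = n2.+1%:R by move/eqP; rewrite eqr_nat => /eqP [].
have entry k (M N : 'M[algC]_k) i : M = N -> M i i = N i i by move->.
have expz_inj (z : int) :
    z != 0 -> (n1.+1%:R : algC) ^ z = n2.+1%:R ^ z -> n1.+1%:R = n2.+1%:R :> algC.
  by move=> z_neq0 /(pexpIrz_pos z_neq0); apply; rewrite posrE ltr0Sn.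
have [a0|a_neq0] := eqVneq a 0; last first.
  by apply: (expz_inj (- a)); rewrite ?oppr_eq0 //; move: (entry _ _ _ ord0 E2);
    rewrite !mxE eqxx !mulr1n.
have [b0|b_neq0] := eqVneq b 0; last first.
  by apply: (expz_inj (- b)); rewrite ?oppr_eq0 //; move: (entry _ _ _ ord0 E3);
    rewrite !mxE eqxx !mulr1n.
have c_neq0 : c != 0 by apply: contra_notN l_neq0 => /eqP c0; rewrite a0 b0 c0.
apply: (expz_inj (- c)); rewrite ?oppr_eq0 //; move: (entry _ _ _ (inord 1) E3).
by rewrite !mxE eqxx !mulr1n inordK.
Qed.

Lemma inSL_unitmx g1 g2 : inSL g1 g2 -> g1 \in unitmx /\ g2 \in unitmx.
Proof. by move=> [det1 det2]; rewrite !unitmxE det1 det2 unitr1. Qed.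

Lemma inSL_conj g1 g2 h1 h2 : inSL g1 g2 -> inSL h1 h2 ->
  inSL (g1 *m h1 *m invmx g1) (g2 *m h2 *m invmx g2).
Proof.
move=> [det_g1 det_g2] [det_h1 det_h2].
by split; rewrite !det_mulmx det_inv ?det_g1 ?det_g2 ?det_h1 ?det_h2 invr1 !mulr1.
Qed.

Lemma acts_conj g1 g2 h1 h2 f f' : g1 \in unitmx -> g2 \in unitmx ->
  acts g1 g2 f f' -> acts h1 h2 f' f' ->
  acts (g1 *m h1 *m invmx g1) (g2 *m h2 *m invmx g2) f f.
Proof.
move=> g1_unit g2_unit gff' hf' x y.
have := gff' (invmx g1 *m x) (invmx g2 *m y).
by rewrite !mulmxA !mulmxV // !mul1mx => <-; rewrite hf' gff' !mulmxA.
Qed.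

Lemma ops_act_Mneg l t f : supported_in (Mneg l) f ->
  forall m, ops_act l t f m = f m * t ^+ `|weight l m|%N.
Proof.
move=> f_supp m; rewrite ffunE.
have [->|/f_supp w_le0] := eqVneq (f m) 0; first by rewrite mulr0 mul0r.
have -> : - weight l m = `|weight l m|%N by move: w_le0; rewrite /Mneg; lia.
by rewrite mulrC.
Qed.

Lemma ops_act0_Mneg l f : supported_in (Mneg l) f -> ops_act l 0 f = weight0_part l f.
Proof.
move=> f_supp; apply/ffunP => m; rewrite ops_act_Mneg // ffunE expr0n absz_eq0.
by case: ifP; rewrite ?mulr1 ?mulr0.
Qed.

Lemma ops_act_weight0_part l s f : ops_act l s (weight0_part l f) = weight0_part l f.
Proof.
apply/ffunP => m; rewrite !ffunE.
by case: ifP => [/eqP ->|_]; rewrite ?oppr0 ?expr0z ?mul1r ?mulr0.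
Qed.

Lemma orbit_weight0_part l f : zariski_closed (Defs.orbit f) ->
  supported_in (Mneg l) f -> Defs.orbit f (weight0_part l f).
Proof.
move=> orbit_closed f_supp; apply: NNPP => /orbit_closed [P [P_orbit]].
have P_curve t : P.@[coords (ops_act l t f)] =
    P.@[fun i => coords f i * t ^+ `|weight l (enum_val i)|%N].
  by apply: meval_eq => i; rewrite /coords ops_act_Mneg.
apply/negP/negPn/eqP; rewrite -ops_act0_Mneg // P_curve.
apply: meval_monomial_curve0 => t; rewrite -P_curve; apply: P_orbit.
have t_neq0 : (t.+1%:R : algC) != 0 by rewrite pnatr_eq0.
by exists (ops_mx2 l t.+1%:R), (ops_mx3 l t.+1%:R); split;
  [exact: inSL_ops | exact: acts_ops].
Qed.

Lemma stabilizer_infinite l f h : nontrivial l -> Defs.orbit f h ->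
  (forall s, s != 0 -> acts (ops_mx2 l s) (ops_mx3 l s) h h) ->
  ~ finite_stabilizer f.
Proof.
move=> l_neq0 [g1 [g2 [g_SL g_fh]]] h_fixed [s stab_s].
have [g1_unit g2_unit] := inSL_unitmx g_SL.
pose conj_ops n :=
  (g1 *m ops_mx2 l n.+1%:R *m invmx g1, g2 *m ops_mx3 l n.+1%:R *m invmx g2).
apply: (@nat_injective_notin_seq _ conj_ops s).
  move=> n1 n2 [/(conjmx_inj g1_unit) E2 /(conjmx_inj g2_unit) E3].
  by apply: ops_mx_injective l_neq0 _ _ _; rewrite /= E2 E3.
move=> n; have n_neq0 : (n.+1%:R : algC) != 0 by rewrite pnatr_eq0.
apply: stab_s; first by apply: inSL_conj => //; exact: inSL_ops.
by apply: acts_conj g_fh _ => //; exact: h_fixed.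
Qed.

Theorem Mneg_not_properly_stable l f : nontrivial l ->
  supported_in (Mneg l) f -> ~ properly_stable f.
Proof.
move=> l_neq0 f_supp [_ [orbit_closed stab_finite]].
apply: (stabilizer_infinite l_neq0 (orbit_weight0_part orbit_closed f_supp)) stab_finite.
by move=> s s_neq0; rewrite -{2}(ops_act_weight0_part l s f); exact: acts_ops.
Qed.

Lemma supported_in_sub (P Q : pred mon) f :
  {subset P <= Q} -> supported_in P f -> supported_in Q f.
Proof. by move=> PQ f_supp m /f_supp /PQ. Qed.

Lemma Nform_supported_Mneg f :
  is_Nform f -> exists2 l, l \in lams' & supported_in (Mneg l) f.
Proof.
case=> [|[|[|[|[|[|]]]]]] f_supp;
  [exists lam'1 | exists lam'2 | exists lam'3 | exists lam'4 | exists lam'5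
  | exists lam'6 | exists lam'7]; rewrite ?inE ?eqxx ?orbT //;
  apply: supported_in_sub f_supp => m;
  rewrite !unfold_in /N1 /N2 /N3 /N4 /N5 /N6 /N7 /Mneg; case_exponents m.
Qed.

Lemma lams'_nontrivial : {in lams', forall l, nontrivial l}.
Proof. by move=> l /[!inE] /or4P[|||/or4P[|||]] /eqP-> /eqP. Qed.

Theorem Nform_not_properly_stable f : is_Nform f -> ~ properly_stable f.
Proof.
case/Nform_supported_Mneg => l /lams'_nontrivial l_neq0.
exact: Mneg_not_properly_stable.
Qed.

Theorem lemma3p1 :
  (forall l : ops, normalized l -> nontrivial l ->
     exists2 l', l' \in lams' & {subset Mneg l <= Mneg l'})
  /\
  (forall f : form23, is_Nform f ->
     ~ properly_stable f).
Proof. exact: (conj normalized_Mneg_sub_lams' Nform_not_properly_stable). Qed.
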